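(* Let $\mathcal G$ be a groupoid (standing conventions) which is ubiquitously fiberwise amenable, and let $u\in\mathcal G^{(0)}$ with $\mathcal G^u_u=\{u\}$. Then for every compact $K\subseteq\mathcal G$ and every $\epsilon>0$ there exist a compact open multisection $\{C_{i,j}: i,j\in F\}$ and an index $i_u\in F$ such that $u\in C_{i_u,i_u}$ and, writing $D=\bigsqcup_{i\in F}C_{i,i_u}$, the set $Dv$ is $(K,\epsilon)$-Følner for every $v\in C_{i_u,i_u}$.
   Context: Standing conventions: a groupoid is a $\sigma$-compact, locally compact, Hausdorff, étale, ample groupoid $\mathcal G$ with compact unit space $\mathcal G^{(0)}$; $\mathcal G^u_u=\{g:s(g)=r(g)=u\}$. For $A,B\subseteq\mathcal G$, $AB=\{ab:a\in A,b\in B,s(a)=r(b)\}$ and $Av=\{a\in A:s(a)=v\}$. A multisection is a finite family $\{C_{i,j}:i,j\in F\}$ of bisections with $C_{i,j}C_{j,k}=C_{i,k}$ and pairwise disjoint levels $C_{i,i}\subseteq\mathcal G^{(0)}$; compact open if all $C_{i,j}$ are. For compact $K$ and $\epsilon>0$, a finite nonempty $F\subseteq\mathcal G$ is $(K,\epsilon)$-Følner if $|KF\setminus F|\le\epsilon|F|$. $\mathcal G$ is ubiquitously fiberwise amenable if for every compact $K\subseteq\mathcal G$ and $\epsilon>0$ there is a compact $L\subseteq\mathcal G$ such that for every $u\in\mathcal G^{(0)}$ there is a $(K,\epsilon)$-Følner set contained in $Lu\cup\{u\}$. *)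

From HB Require Import structures.
From mathcomp Require Import all_boot all_order all_algebra.
From mathcomp Require Import finmap.
From mathcomp Require Import all_classical all_reals all_analysis.
Set Implicit Arguments. Unset Strict Implicit. Unset Printing Implicit Defensive.
Import Order.TTheory GRing.Theory Num.Theory.
Local Open Scope classical_set_scope.
Local Open Scope ring_scope.

Section Groupoid.
Variables (G : topologicalType) (src rng : G -> G) (mul : G -> G -> G) (inv : G -> G).

Definition unit_space : set G := range src.

(* algebraic groupoid axioms; units are elements of G *)
Definition groupoid_axioms : Prop :=
  (forall g, src (src g) = src g /\ rng (src g) = src g) /\
  (forall g, src (rng g) = rng g /\ rng (rng g) = rng g) /\
  (forall g h, src g = rng h -> src (mul g h) = src h /\ rng (mul g h) = rng g) /\
  (forall g h k, src g = rng h -> src h = rng k ->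
      mul (mul g h) k = mul g (mul h k)) /\
  (forall g, mul (rng g) g = g /\ mul g (src g) = g) /\
  (forall g, src (inv g) = rng g /\ rng (inv g) = src g /\
             mul g (inv g) = rng g /\ mul (inv g) g = src g).

Definition topological_groupoid_axioms : Prop :=
  [/\ continuous src, continuous rng, continuous inv &
      {within [set p : G * G | src p.1 = rng p.2], continuous (fun p => mul p.1 p.2)}].

Definition local_homeomorphism (f : G -> G) : Prop :=
  continuous f /\
  forall x, exists W : set G, [/\ open W, W x, {in W &, injective f} &
      forall V, open V -> V `<=` W -> open (f @` V)].

Definition sigma_compact : Prop :=
  exists Kn : nat -> set G, (forall n, compact (Kn n)) /\ \bigcup_n Kn n = setT.

Definition bisection (B : set G) : Prop :=
  [/\ open B, {in B &, injective src} & {in B &, injective rng}].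

Definition ample : Prop :=
  forall x (O : set G), open O -> O x ->
    exists B, [/\ bisection B, compact B, B x & B `<=` O].

(* the standing conventions *)
Definition ample_groupoid : Prop :=
  groupoid_axioms /\ topological_groupoid_axioms /\ hausdorff_space G /\
  locally_compact [set: G] /\ sigma_compact /\
  local_homeomorphism rng /\ local_homeomorphism src /\
  ample /\ compact unit_space.

Definition setmul (A B : set G) : set G :=
  [set g | exists a b, [/\ A a, B b, src a = rng b & g = mul a b]].

Definition fib (A : set G) (v : G) : set G := [set a | A a /\ src a = v].

Definition isotropy (u : G) : set G := [set g | src g = u /\ rng g = u].

Definition multisection (F : finType) (C : F -> F -> set G) : Prop :=
  [/\ (forall i j, bisection (C i j)),
      (forall i j k, setmul (C i j) (C j k) = C i k),
      (forall i, C i i `<=` unit_space) &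
      (forall i j, i != j -> C i i `&` C j j = set0)].

Definition compact_open_multisection (F : finType) (C : F -> F -> set G) : Prop :=
  multisection C /\ (forall i j, compact (C i j) /\ open (C i j)).

Definition folner (R : realType) (K : set G) (eps : R) (A : set G) : Prop :=
  [/\ finite_set A, A !=set0, finite_set (setmul K A `\` A) &
      ((#|` fset_set (setmul K A `\` A)|)%fset%:R <= eps * (#|` fset_set A|)%fset%:R)].

Definition ubiquitously_fiberwise_amenable (R : realType) : Prop :=
  forall (K : set G) (eps : R), compact K -> 0 < eps ->
    exists L : set G, compact L /\
      forall u, unit_space u ->
        exists A, folner K eps A /\ A `<=` fib L u `|` [set u].

End Groupoid.

From HB Require Import structures.
From mathcomp Require Import all_boot all_order all_algebra.
From mathcomp Require Import finmap.
From mathcomp Require Import all_classical all_reals all_analysis.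
Import Order.TTheory GRing.Theory Num.Theory.

(* Folner sets of the fibre at [u] containing [u] exist: if the fibre is
   finite take all of it, otherwise adjoin [u] to a large Folner set built from
   disjoint right translates of the sets given by ubiquitous fibrewise
   amenability.  Trivial isotropy makes the ranges of the arrows of such a set
   [A] distinct, so [A] is the [u]-fibre of a finite family of compact open
   bisections [B i] with disjoint ranges, one of them a neighbourhood of [u] in
   the unit space.  Cover [K] by compact open bisections [E j]: the boundary of
   the [v]-fibre of the union of the [B i] is parametrised by the products
   [E j B i], and since sources of compact (resp. open) sets form closed
   (resp. open) sets, for [v] in a compact open neighbourhood [W] of [u] this
   parametrisation factors through the one at [u], so the [v]-fibres are Folner
   too.  Restricting the [B i] to sources in [W], the sets [B i (B j)^-1] form
   the multisection. *)

Set Implicit Arguments. Unset Strict Implicit. Unset Printing Implicit Defensive.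
Local Open Scope classical_set_scope.
Local Open Scope ring_scope.

Local Notation fcard A := (#|` fset_set A|)%fset.

Section FiniteSetCard.
Variable T : choiceType.
Implicit Types A B : set T.

Lemma subset_leq_fcard A B : finite_set B -> A `<=` B -> (fcard A <= fcard B)%N.
Proof.
move=> fB AB; have fA := sub_finite_set AB fB.
by apply: fsubset_leq_card; rewrite -fset_set_sub.
Qed.

Lemma leq_fcardU A B : finite_set A -> finite_set B ->
  (fcard (A `|` B) <= fcard A + fcard B)%N.
Proof. by move=> fA fB; rewrite fset_setU //; apply: leq_card_fsetU. Qed.

Lemma fcardU_disjoint A B : finite_set A -> finite_set B -> A `&` B = set0 ->
  fcard (A `|` B) = (fcard A + fcard B)%N.
Proof.
move=> fA fB AB; rewrite fset_setU // cardfsU.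
by rewrite -fset_setI // AB fset_set0 cardfs0 subn0.
Qed.

Lemma fcard0 : fcard (@set0 T) = 0%N.
Proof. by rewrite fset_set0 cardfs0. Qed.

Lemma fcard_gt0 A : finite_set A -> A !=set0 -> (0 < fcard A)%N.
Proof.
move=> fA [x Ax]; rewrite cardfs_gt0; apply/eqP => A0.
by move: Ax; rewrite (fset_set_set0 fA A0).
Qed.

Lemma leq_fcard_image (U : choiceType) (f : T -> U) A : finite_set A ->
  (fcard (f @` A) <= fcard A)%N.
Proof.
by move=> fA; rewrite fset_set_image //; apply: leq_imfset_card.
Qed.

Lemma fcard_in_image (U : choiceType) (f : T -> U) A : finite_set A ->
  {in A &, injective f} -> fcard (f @` A) = fcard A.
Proof.
move=> fA inj; rewrite fset_set_image // card_in_imfset // => x y.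
by rewrite !in_fset_set // => xA yA; apply: inj.
Qed.

End FiniteSetCard.

Lemma leq_fcard_image_factor (T U : choiceType) (f g : T -> U) (A : set T) : finite_set A ->
  (forall p q, A p -> A q -> f p = f q -> g p = g q) ->
  (fcard (g @` A) <= fcard (f @` A))%N.
Proof.
move=> fA fg; have [[x0 Ax0]|A0] := pselect (A !=set0); last first.
  have -> : A = set0 by apply/seteqP; split => // x Ax; apply: A0; exists x.
  by rewrite image_set0 fcard0.
pose pre y := xget x0 [set p | A p /\ f p = y].
have preP p : A p -> A (pre (f p)) /\ f (pre (f p)) = f p.
  by move=> Ap; apply: (xgetPex x0 (P := [set q | A q /\ f q = f p])); exists p.
have -> : g @` A = (g \o pre) @` (f @` A).
  apply/seteqP; split => [_ [p Ap <-]|_ [_ [p Ap <-] <-]].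
    by exists (f p); [exists p | have [Aq fq] := preP p Ap; apply: fg].
  by exists (pre (f p)); [case: (preP p Ap)|].
by apply: leq_fcard_image; apply: finite_image.
Qed.

Lemma finite_fibre_in_injective (T U : Type) (f : T -> U) (V : set T) y :
  {in V &, injective f} -> finite_set (V `&` f @^-1` [set y]).
Proof.
move=> finj; have [[z [Vz fz]]|nz] := pselect (exists z, V z /\ f z = y).
  apply: (@sub_finite_set _ _ [set z]); last exact: finite_set1.
  by move=> w [Vw fw]; apply: finj; rewrite ?inE //= fw fz.
apply: (@sub_finite_set _ _ set0); last exact: finite_set0.
by move=> w [Vw fw]; apply: nz; exists w.
Qed.

(* [compact_cover] is only available in pointed spaces. *)
Definition pointed_at (T : topologicalType) (x0 : T) : Type := T.
HB.instance Definition _ (T : topologicalType) (x0 : T) :=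
  Topological.copy (pointed_at x0) T.
HB.instance Definition _ (T : topologicalType) (x0 : T) :=
  isPointed.Build (pointed_at x0) x0.

Lemma compact_cover_compact (T : topologicalType) (K : set T) :
  compact K -> cover_compact K.
Proof.
move=> cK; have [[x0 _]|T0] := pselect (exists x : T, True).
  by move: cK; rewrite -[compact K]/(@compact (pointed_at x0) K) compact_cover.
by move=> I D F _ _; exists fset0 => // x; exfalso; apply: T0; exists x.
Qed.

Lemma hausdorff_finite_separation (T : topologicalType) (S : set T) :
  hausdorff_space T -> finite_set S ->
  exists N : T -> set T, (forall x, S x -> nbhs x (N x)) /\
    (forall x y, S x -> S y -> x <> y -> N x `&` N y = set0).
Proof.
move=> hT fS.
have sepP (p : T * T) : exists q : set T * set T, p.1 != p.2 ->
    [/\ nbhs p.1 q.1, nbhs p.2 q.2 & q.1 `&` q.2 = set0].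
  have [pp|pp] := boolP (p.1 != p.2); last by exists (setT, setT).
  move: hT; rewrite open_hausdorff => /(_ _ _ pp) [[P Q] [/set_mem Pp /set_mem Qp]].
  by move=> [oP oQ /eqP PQ]; exists (P, Q) => _; split=> //; apply: open_nbhs_nbhs.
have [sep hsep] := choice sepP.
exists (fun x => \bigcap_(y in [set` fset_set S])
  [set z | y != x -> (sep (x, y)).1 z /\ (sep (y, x)).2 z]); split.
  move=> x Sx; apply: filter_bigI => y _; have [->|yx] := eqVneq y x.
    by apply: filterE.
  have xy : x != y by rewrite eq_sym.
  have [xy_x _ _] := hsep (x, y) xy.
  have [_ yx_x _] := hsep (y, x) yx.
  by apply: filterS (filterI xy_x yx_x) => z [] /=.
move=> x y Sx Sy /eqP xy; apply/seteqP; split => // z [/= Nxz Nyz].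
have inS w : S w -> w \in fset_set S by move=> Sw; rewrite in_fset_set // inE.
have [_ _ /seteqP [sep0 _]] := hsep (x, y) xy; apply: (sep0 z); split.
  have yx : y != x by rewrite eq_sym.
  exact: (Nxz y (inS y Sy) yx).1.
exact: (Nyz x (inS x Sx) xy).2.
Qed.

Section LocalHomeomorphism.
Variables (T : topologicalType) (f : T -> T).
Hypothesis f_lh : local_homeomorphism f.

Lemma open_image_local_homeomorphism O : open O -> open (f @` O).
Proof.
move=> oO; rewrite openE => _ [x Ox <-].
have [W [oW Wx _ fW]] := f_lh.2 x.
apply: (@filterS _ _ _ (f @` (O `&` W))); first by move=> _ [y [Oy _] <-]; exists y.
apply: open_nbhs_nbhs; split; last by exists x.
by apply: fW; [exact: openI | exact: subIsetr].
Qed.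

Lemma finite_fibre_compact K y : compact K -> finite_set (K `&` f @^-1` [set y]).
Proof.
move=> /compact_cover_compact cK; have [W fW] := choice f_lh.2.
have oW i : K i -> open (W i) by case: (fW i).
have KW : K `<=` cover K W by move=> x Kx; exists x => //; case: (fW x).
have [D _ KD] := cK T K W oW KW.
apply: (@sub_finite_set _ _ (\bigcup_(i in [set` D]) (W i `&` f @^-1` [set y]))).
  by move=> x [/KD [i Di Wx] fx]; exists i.
apply: bigcup_finite; first exact: finite_fset.
by move=> i _; have [_ _ finj _] := fW i; apply: finite_fibre_in_injective.
Qed.

Lemma near_image_open (X : set T) u : open X ->
  \forall v \near u, (f @` X) u -> (f @` X) v.
Proof.
move=> oX; have [Xu|nXu] := pselect ((f @` X) u); last by apply: filterE => v /nXu.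
have : nbhs u (f @` X).
  by apply: open_nbhs_nbhs; split => //; exact: open_image_local_homeomorphism.
by apply: filterS => v Xv _.
Qed.

Lemma near_image_compact (X : set T) u : hausdorff_space T -> compact X ->
  \forall v \near u, (f @` X) v -> (f @` X) u.
Proof.
move=> hT cX; have [Xu|nXu] := pselect ((f @` X) u); first by apply: filterE.
have : nbhs u (~` (f @` X)).
  apply: open_nbhs_nbhs; split => //; apply: closed_openC; apply: compact_closed => //.
  by apply: continuous_compact => //; apply: continuous_subspaceT; case: f_lh.
by apply: filterS => v nXv /nXv.
Qed.

End LocalHomeomorphism.

Section AmpleGroupoid.
Variables (R : realType) (G : topologicalType).
Variables (src rng : G -> G) (mul : G -> G -> G) (inv : G -> G).
Hypothesis gpd : groupoid_axioms src rng mul inv.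
Hypothesis top : topological_groupoid_axioms src rng mul inv.
Hypothesis hausG : hausdorff_space G.
Hypothesis rng_lh : local_homeomorphism rng.
Hypothesis src_lh : local_homeomorphism src.
Hypothesis ampleG : ample src rng.
Hypothesis ufaG : ubiquitously_fiberwise_amenable src rng mul R.

Local Notation unit_space := (unit_space src).
Local Notation setmul := (setmul src rng mul).
Local Notation bisection := (bisection src rng).
Local Notation fib := (fib src).
Local Notation folner := (folner src rng mul).

Lemma src_src g : src (src g) = src g. Proof. by case: gpd => [h _]; case: (h g). Qed.
Lemma rng_src g : rng (src g) = src g. Proof. by case: gpd => [h _]; case: (h g). Qed.
Lemma src_rng g : src (rng g) = rng g. Proof. by case: gpd => [_ [h _]]; case: (h g). Qed.

Lemma src_mul g h : src g = rng h -> src (mul g h) = src h.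
Proof. by case: gpd => [_ [_ [hh _]]] e; case: (hh g h e). Qed.

Lemma rng_mul g h : src g = rng h -> rng (mul g h) = rng g.
Proof. by case: gpd => [_ [_ [hh _]]] e; case: (hh g h e). Qed.

Lemma mulA g h k : src g = rng h -> src h = rng k ->
  mul (mul g h) k = mul g (mul h k).
Proof. by case: gpd => [_ [_ [_ [hh _]]]]; apply: hh. Qed.

Lemma mul_rng_l g : mul (rng g) g = g.
Proof. by case: gpd => [_ [_ [_ [_ [hh _]]]]]; case: (hh g). Qed.
Lemma mul_src_r g : mul g (src g) = g.
Proof. by case: gpd => [_ [_ [_ [_ [hh _]]]]]; case: (hh g). Qed.
Lemma src_inv g : src (inv g) = rng g.
Proof. by case: gpd => [_ [_ [_ [_ [_ hh]]]]]; case: (hh g). Qed.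
Lemma rng_inv g : rng (inv g) = src g.
Proof. by case: gpd => [_ [_ [_ [_ [_ hh]]]]]; case: (hh g) => _ []. Qed.
Lemma mul_inv g : mul g (inv g) = rng g.
Proof. by case: gpd => [_ [_ [_ [_ [_ hh]]]]]; case: (hh g) => _ [_ []]. Qed.
Lemma mul_inv_l g : mul (inv g) g = src g.
Proof. by case: gpd => [_ [_ [_ [_ [_ hh]]]]]; case: (hh g) => _ [_ []]. Qed.

Lemma invK g : inv (inv g) = g.
Proof.
have sx : src (inv (inv g)) = src g by rewrite src_inv rng_inv.
rewrite -[inv (inv g)]mul_src_r sx -(mul_inv_l g) -mulA ?sx ?rng_inv ?src_inv //.
by rewrite mul_inv_l src_inv mul_rng_l.
Qed.

Lemma mul_cancel_r a b g : src a = rng g -> src b = rng g ->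
  mul a g = mul b g -> a = b.
Proof.
move=> sa sb e; rewrite -[a]mul_src_r -[b]mul_src_r sa sb -mul_inv.
by rewrite -!mulA ?rng_inv // e.
Qed.

Lemma mul_inv_inv_r p q r : src p = src q -> src q = src r ->
  mul (mul p (inv q)) (mul q (inv r)) = mul p (inv r).
Proof.
move=> pq qr; have qr' : src q = rng (inv r) by rewrite rng_inv.
rewrite mulA ?src_inv ?rng_mul ?rng_inv //.
by rewrite -[mul (inv q) _]mulA ?src_inv // mul_inv_l qr' mul_rng_l.
Qed.

Lemma unit_spaceP x : unit_space x <-> src x = x.
Proof. by split=> [[g _ <-]|e]; [rewrite src_src | exists x]. Qed.

Lemma unit_src x : unit_space x -> src x = x. Proof. by move/unit_spaceP. Qed.
Lemma unit_rng x : unit_space x -> rng x = x. Proof. by case=> g _ <-; rewrite rng_src. Qed.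

Lemma unit_inv x : unit_space x -> inv x = x.
Proof.
move=> ux; rewrite -[inv x]mul_rng_l rng_inv (unit_src ux).
by rewrite mul_inv (unit_rng ux).
Qed.

Lemma rng_in_unit_space g : unit_space (rng g).
Proof. by exists (rng g); rewrite ?src_rng. Qed.

(* Two arrows with source [u] and the same range differ by an element of the
   isotropy group at [u]. *)
Lemma trivial_isotropy_rng_inj u a b : isotropy src rng u = [set u] ->
  src a = u -> src b = u -> rng a = rng b -> a = b.
Proof.
move=> iso sa sb rab.
have : isotropy src rng u (mul (inv b) a).
  by rewrite /isotropy /= src_mul ?rng_mul ?src_inv ?rng_inv.
rewrite iso => /(congr1 (mul b)); rewrite -mulA ?rng_inv ?src_inv //.
by rewrite mul_inv -rab mul_rng_l => ->; rewrite -sb mul_src_r.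
Qed.

Lemma continuous_src : continuous src. Proof. by case: top. Qed.
Lemma continuous_rng : continuous rng. Proof. by case: top. Qed.
Lemma continuous_inv : continuous inv. Proof. by case: top. Qed.

Lemma open_preimage_src (W : set G) : open W -> open (src @^-1` W).
Proof. exact: (continuousP _).1 continuous_src W. Qed.

Lemma ample_nbhs x X : nbhs x X ->
  exists B, [/\ bisection B, compact B, B x & B `<=` X].
Proof.
rewrite nbhsE; move=> [U [oU Ux] UX]; have [B [bB cB Bx BU]] := ampleG oU Ux.
by exists B; split => //; apply: subset_trans BU UX.
Qed.

Lemma unit_space_nbhs u : unit_space u -> nbhs u unit_space.
Proof.
move=> uu; have [W [oW Wu srcW _]] := src_lh.2 u.
apply: (@filterS _ _ _ (W `&` src @^-1` W)).
  by move=> g [Wg Wsg]; apply/unit_spaceP; apply: srcW; rewrite ?inE // src_src.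
apply: open_nbhs_nbhs; split; first by apply: openI => //; apply: open_preimage_src.
by split => //=; rewrite unit_src.
Qed.

Lemma image_inv B : inv @` B = inv @^-1` B.
Proof.
apply/seteqP; split=> [_ [b Bb <-]|g Bg]; first by rewrite /= invK.
by exists (inv g); rewrite ?invK.
Qed.

Lemma compact_image_inv B : compact B -> compact (inv @` B).
Proof.
by move=> cB; apply: continuous_compact => //; apply/continuous_subspaceT/continuous_inv.
Qed.

Lemma bisection_image_inv B : bisection B -> bisection (inv @` B).
Proof.
move=> [oB srcB rngB]; split.
- by rewrite image_inv; exact: (continuousP _).1 continuous_inv _ oB.
- move=> _ _ /set_mem [a Ba <-] /set_mem [b Bb <-]; rewrite !src_inv => e.
  by rewrite (rngB a b) // inE.
- move=> _ _ /set_mem [a Ba <-] /set_mem [b Bb <-]; rewrite !rng_inv => e.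
  by rewrite (srcB a b) // inE.
Qed.

Lemma closed_composable : closed [set p : G * G | src p.1 = rng p.2].
Proof.
rewrite -[X in closed X]setCK; apply: open_closedC; rewrite openE => -[a b] /eqP ab.
move: hausG; rewrite open_hausdorff => /(_ _ _ ab) [[U1 U2]] [/= /set_mem U1a /set_mem U2b].
move=> [/= oU1 oU2 /eqP U12]; exists ((src @^-1` U1), (rng @^-1` U2)) => /=.
  by split; [apply: continuous_src | apply: continuous_rng]; apply: open_nbhs_nbhs.
move=> [x y] [/= U1x U2y] xy.
have : (U1 `&` U2) (src x) by split; rewrite // xy.
by rewrite U12.
Qed.

Lemma near_mul a b N : src a = rng b -> nbhs (mul a b) N ->
  exists P1 P2, [/\ nbhs a P1, nbhs b P2 &
    forall x y, P1 x -> P2 y -> src x = rng y -> N (mul x y)].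
Proof.
move=> ab Nab; have [_ _ _ mul_cont] := top.
have := (subspace_continuousP _ _).1 mul_cont (a, b) ab N Nab.
rewrite /= nbhs_simpl /= /within /= => -[[P1 P2] /= [P1a P2b] P12].
by exists P1, P2; split => // x y P1x P2y xy; apply: (P12 (x, y)).
Qed.

Lemma compact_setmul B C : compact B -> compact C -> compact (setmul B C).
Proof.
move=> cB cC; have [_ _ _ mul_cont] := top.
have -> : setmul B C = (fun p => mul p.1 p.2) @`
    ((B `*` C) `&` [set p | src p.1 = rng p.2]).
  apply/seteqP; split=> [_ [x [y [Bx Cy xy ->]]]|_ [[x y] [[/= Bx Cy] xy] <-]].
    by exists (x, y).
  by exists x, y.
apply: continuous_compact; first exact: continuous_subspaceW mul_cont.
by apply: compact_closedI; [exact: compact_setX | exact: closed_composable].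
Qed.

Definition arrow_from (Z : set G) (w : G) : G := xget w [set x | Z x /\ src x = w].

Lemma arrow_fromP Z w : (src @` Z) w -> Z (arrow_from Z w) /\ src (arrow_from Z w) = w.
Proof. by move=> [x Zx xw]; apply: (xgetPex w (P := [set x | Z x /\ src x = w])); exists x. Qed.

Lemma arrow_from_src (Z : set G) x : {in Z &, injective src} -> Z x -> arrow_from Z (src x) = x.
Proof.
move=> srcZ Zx; have [Za srca] := arrow_fromP (ex_intro2 _ _ x Zx erefl).
by apply: srcZ; rewrite ?inE.
Qed.

(* Near [mul b c] with [c] in the bisection [C], every arrow [y] factors as
   [mul (mul y (inv c')) c'] where [c'] is the arrow of [C] with the source of
   [y]; continuity of that factorisation gives openness. *)
Lemma open_setmul U C : open U -> bisection C -> open (setmul U C).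
Proof.
move=> oU [oC srcC _]; rewrite openE => _ [b [c [Ub Cc bc ->]]].
set y := mul b c; pose sec y' := arrow_from C (src y').
have near_srcC V : open V -> V c -> nbhs y (src @^-1` (src @` (V `&` C))).
  move=> oV Vc; apply: continuous_src; apply: open_nbhs_nbhs; split.
    by apply: (open_image_local_homeomorphism src_lh); apply: openI.
  by exists c; rewrite /y ?src_mul.
have near_sec P : nbhs c P -> nbhs y [set y' | P (sec y')].
  rewrite nbhsE => -[V [oV Vc] VP]; apply: filterS (near_srcC V oV Vc).
  by move=> y' [c' [Vc' Cc'] c'y'] /=; rewrite /sec -c'y' arrow_from_src //; apply: VP.
have yc : mul y (inv c) = b by rewrite /y mulA ?rng_inv // mul_inv -bc mul_src_r.
have [P1 [P2 [P1y P2c P12]]] : exists P1 P2, [/\ nbhs y P1, nbhs (inv c) P2 &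
    forall x y, P1 x -> P2 y -> src x = rng y -> U (mul x y)].
  by apply: near_mul; rewrite ?yc ?src_mul ?rng_inv //; apply: open_nbhs_nbhs.
have srcC_y : nbhs y (src @^-1` (src @` C)).
  by apply: filterS (near_srcC _ openT I) => y' [c' [_ Cc'] c'y']; exists c'.
apply: (filterS _ (filterI srcC_y (filterI P1y (near_sec _ (continuous_inv P2c))))).
move=> y' [Cy' [P1y' /= P2y']]; have [Csec esec] := arrow_fromP Cy'.
exists (mul y' (inv (sec y'))), (sec y'); split => //.
- by apply: P12 => //; rewrite rng_inv esec.
- by rewrite src_mul ?src_inv // rng_inv esec.
- by rewrite mulA ?rng_inv ?src_inv // mul_inv_l esec mul_src_r.
Qed.

Lemma bisection_setmul B C : bisection B -> bisection C -> bisection (setmul B C).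
Proof.
move=> [oB srcB rngB] [oC srcC rngC]; split; first by apply: open_setmul.
- move=> _ _ /set_mem [b [c [Bb Cc bc ->]]] /set_mem [b' [c' [Bb' Cc' bc' ->]]].
  rewrite !src_mul // => e; have cc' : c = c' by apply: srcC; rewrite ?inE.
  by subst c'; have -> // : b = b' by apply: srcB; rewrite ?inE // bc bc'.
- move=> _ _ /set_mem [b [c [Bb Cc bc ->]]] /set_mem [b' [c' [Bb' Cc' bc' ->]]].
  rewrite !rng_mul // => e; have bb' : b = b' by apply: rngB; rewrite ?inE.
  by subst b'; have -> // : c = c' by apply: rngC; rewrite ?inE // -bc -bc'.
Qed.

Lemma setmulUr (K X Y : set G) : setmul K (X `|` Y) = setmul K X `|` setmul K Y.
Proof.
apply/seteqP; split=> [_ [k [a [Kk [Xa|Ya] ka ->]]]|]; first by left; exists k, a.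
  by right; exists k, a.
by move=> _ [|] [k [a [Kk Za ka ->]]]; exists k, a; split => //; [left|right].
Qed.

Lemma folner_mul_r (K A : set G) (d : R) g :
  A `<=` [set x | src x = rng g] -> folner K d A ->
  folner K d ((mul^~ g) @` A) /\ (mul^~ g) @` A `<=` [set x | src x = src g].
Proof.
move=> Ag [fA nA fKA cKA].
have mulg_inj : {in [set x | src x = rng g] &, injective (mul^~ g)}.
  by move=> x y /set_mem xg /set_mem yg; apply: mul_cancel_r.
have KAg : setmul K A `<=` [set x | src x = rng g].
  by move=> _ [k [a [Kk Aa ka ->]]]; rewrite /= src_mul // Ag.
have boundary : setmul K ((mul^~ g) @` A) `\` (mul^~ g) @` A =
    (mul^~ g) @` (setmul K A `\` A).
  apply/seteqP; split=> [_ [[k [_ [Kk [a Aa <-] ka ->]]] nAg]|].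
    have ka' : src k = rng a by rewrite ka rng_mul // Ag.
    have kag : mul (mul k a) g = mul k (mul a g) by rewrite mulA // Ag.
    exists (mul k a) => //; split; first by exists k, a.
    by move=> Aka; apply: nAg; exists (mul k a).
  move=> _ [x [[k [a [Kk Aa ka ->]]] nAx] <-]; split.
    exists k, (mul a g); split => //; first by exists a.
      by rewrite rng_mul // Ag.
    by rewrite mulA // Ag.
  move=> [a' Aa' e]; apply: nAx; suff <- : a' = mul k a by [].
  apply: mulg_inj; rewrite ?inE /=; [exact: Ag | rewrite (src_mul ka); exact: Ag |].
  by rewrite e.
split; last by move=> _ [a Aa <-]; rewrite /= src_mul // Ag.
split; [exact: finite_image | by case: nA => a Aa; exists (mul a g), a | |].
  by rewrite boundary; apply: finite_image.
rewrite boundary !fcard_in_image //.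
  by move=> x y /set_mem /Ag xg /set_mem /Ag yg; apply: mulg_inj; rewrite inE.
by move=> x y /set_mem [/KAg xg _] /set_mem [/KAg yg _]; apply: mulg_inj; rewrite inE.
Qed.

Lemma folner_setU (K X Y : set G) (d : R) : 0 <= d ->
  folner K d X -> folner K d Y -> X `&` Y = set0 -> folner K d (X `|` Y).
Proof.
move=> d0 [fX nX fKX cKX] [fY nY fKY cKY] XY.
have sub : setmul K (X `|` Y) `\` (X `|` Y) `<=`
    (setmul K X `\` X) `|` (setmul K Y `\` Y).
  by rewrite setmulUr => x [[KXx|KYx] nx]; [left|right]; split => // h; apply: nx; [left|right].
have fD : finite_set ((setmul K X `\` X) `|` (setmul K Y `\` Y)) by rewrite finite_setU.
split; [by rewrite finite_setU | by case: nX => x Xx; exists x; left | |].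
  exact: sub_finite_set sub fD.
apply: (@le_trans _ _ (fcard (setmul K X `\` X) + fcard (setmul K Y `\` Y))%N%:R).
  by rewrite ler_nat; apply: leq_trans (subset_leq_fcard fD sub) (leq_fcardU _ _).
by rewrite fcardU_disjoint // !natrD mulrDr lerD.
Qed.

(* Each step adds a disjoint right translate [A g] of a Folner set [A] at
   [rng g], where [g] in the infinite fibre avoids the finitely many arrows
   that could make [A g] meet the sets built so far. *)
Lemma large_folner_in_fibre (K : set G) (d : R) u : compact K -> 0 < d ->
  unit_space u -> infinite_set [set x | src x = u] -> forall n,
  exists B, [/\ folner K d B, B `<=` [set x | src x = u] & (n <= fcard B)%N].
Proof.
move=> cK d0 uu infGu; have [L [cL folL]] := ufaG cK d0.
elim=> [|n [B [folB Bu nB]]].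
  have [A [folA AL]] := folL u uu; exists A; split => //.
  by move=> a /AL [[_ au]|->] //=; rewrite unit_src.
have [finB _ _ _] := folB.
set Bad := B `|` \bigcup_(x in B) ((fun l => mul (inv l) x) @`
                                   (L `&` rng @^-1` [set rng x])).
have finBad : finite_set Bad.
  rewrite /Bad finite_setU; split => //; apply: bigcup_finite => // x _.
  by apply: finite_image; apply: finite_fibre_compact.
have [g [gu nBad]] : exists g, src g = u /\ ~ Bad g.
  by have [g [gu nBad]] := infinite_setN0 (infinite_setD infGu finBad); exists g.
have [A [folA AL]] := folL (rng g) (rng_in_unit_space g).
have Ag : A `<=` [set x | src x = rng g].
  by move=> a /AL [[_ ag]|->] //=; rewrite src_rng.
have [folAg Agsrc] := folner_mul_r Ag folA.
have BAg : B `&` (mul^~ g) @` A = set0.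
  apply/seteqP; split => // x [Bx [a Aa ax]]; subst x; apply: nBad.
  case: (AL a Aa) => [[La ag]|ag]; last by left; move: Bx; rewrite ag mul_rng_l.
  right; exists (mul a g) => //; exists a; first by split; rewrite //= rng_mul.
  by rewrite -mulA ?src_inv ?rng_inv // mul_inv_l ag mul_rng_l.
exists (B `|` (mul^~ g) @` A); split.
- exact: folner_setU (ltW d0) folB folAg BAg.
- by move=> x [/Bu|/Agsrc] //=; rewrite gu.
have [finAg nAg _ _] := folAg.
rewrite fcardU_disjoint //; apply: leq_trans (leq_add nB (fcard_gt0 finAg nAg)).
by rewrite addn1.
Qed.

(* A finite fibre is itself Folner; otherwise adjoin [u] to a Folner set so
   large that the finitely many arrows of [K] with source [u] are negligible. *)
Lemma folner_in_fibre_with_unit (K : set G) (eps : R) u : compact K -> 0 < eps ->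
  unit_space u -> exists A, [/\ folner K eps A, A `<=` [set x | src x = u] & A u].
Proof.
move=> cK eps0 uu.
have [finGu|infGu] := pselect (finite_set [set x | src x = u]).
  have noboundary : setmul K [set x | src x = u] `\` [set x | src x = u] = set0.
    by apply/seteqP; split => // _ [[k [a [Kk au ka ->]]]]; rewrite /= src_mul.
  exists [set x | src x = u]; split=> //; last exact: unit_src.
  split => //; first by exists u; apply: unit_src.
    by rewrite noboundary.
  by rewrite noboundary fcard0 mulr_ge0 // ltW.
have d0 : 0 < eps / 2 by rewrite divr_gt0.
set c := fcard (K `&` src @^-1` [set u]).
have [B [folB Bu nB]] := large_folner_in_fibre cK d0 uu infGu (Num.bound (c%:R / (eps / 2))).
have cB : c%:R <= eps / 2 * (fcard B)%:R.
  apply: ltW; rewrite mulrC -ltr_pdivrMr //.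
  apply: lt_le_trans (archi_boundP _) _; first by rewrite divr_ge0 // ltW.
  by rewrite ler_nat.
have [finB nB0 finKB cKB] := folB.
have finKu : finite_set (K `&` src @^-1` [set u]) by apply: finite_fibre_compact.
have finBu : finite_set (B `|` [set u]) by rewrite finite_setU; split => //; exact: finite_set1.
have sub : setmul K (B `|` [set u]) `\` (B `|` [set u]) `<=`
    (setmul K B `\` B) `|` (K `&` src @^-1` [set u]).
  rewrite setmulUr => x [[KBx|[k [a [Kk -> ku ->]]]] nx].
    by left; split => // Bx; apply: nx; left.
  have uk : u = src k by rewrite ku unit_rng.
  by right; rewrite [in mul k u]uk mul_src_r.
have finD : finite_set ((setmul K B `\` B) `|` (K `&` src @^-1` [set u])).
  by rewrite finite_setU.
exists (B `|` [set u]); split; last by right.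
  split; [done | by exists u; right | exact: sub_finite_set sub finD |].
  apply: (@le_trans _ _ (fcard (setmul K B `\` B) + c)%N%:R).
    by rewrite ler_nat; apply: leq_trans (subset_leq_fcard finD sub) (leq_fcardU _ _).
  rewrite natrD; apply: (@le_trans _ _ (eps * (fcard B)%:R)).
    by rewrite [X in X * _]splitr mulrDl lerD.
  apply: ler_wpM2l; first exact: ltW.
  by rewrite ler_nat; apply: subset_leq_fcard => // x Bx; left.
by move=> x [/Bu|->] //=; rewrite unit_src.
Qed.

Lemma separating_bisections (A : set G) u : finite_set A ->
  A `<=` [set x | src x = u] -> unit_space u -> isotropy src rng u = [set u] ->
  exists B : G -> set G,
    (forall a, A a -> [/\ bisection (B a), compact (B a), B a a &
                          (a = u -> B a `<=` unit_space)]) /\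
    (forall a b x y, A a -> A b -> a <> b -> B a x -> B b y -> rng x <> rng y).
Proof.
move=> finA Au uu iso.
have [N [Nnbhs Ndisj]] := hausdorff_finite_separation hausG (finite_image rng finA).
have BP a : exists Ba, A a -> [/\ bisection Ba, compact Ba, Ba a &
    Ba `<=` rng @^-1` N (rng a) `&` [set x | a = u -> unit_space x]].
  have [Aa|nAa] := pselect (A a); last by exists set0.
  have Na : nbhs a (rng @^-1` N (rng a)) by apply: continuous_rng; apply: Nnbhs; exists a.
  have units_a : nbhs a [set x | a = u -> unit_space x].
    have [au|nau] := pselect (a = u); last by apply: filterE => x /nau.
    by rewrite au; apply: filterS (unit_space_nbhs uu) => x ux _.
  by have [Ba [? ? ? ?]] := ample_nbhs (filterI Na units_a); exists Ba.
have [B hB] := choice BP.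
exists B; split=> [a Aa|a b x y Aa Ab ab Bx By xy].
  by have [bB cB Ba sB] := hB a Aa; split => // au x /sB [_]; apply.
have [_ _ _ /(_ x Bx) [Nx _]] := hB a Aa; have [_ _ _ /(_ y By) [Ny _]] := hB b Ab.
have rab : rng a <> rng b.
  by move/(trivial_isotropy_rng_inj iso (Au a Aa) (Au b Ab)).
have /seteqP [N0 _] := Ndisj _ _ (imageP rng Aa) (imageP rng Ab) rab.
by apply: (N0 (rng x)); split; [exact: Nx | rewrite xy; exact: Ny].
Qed.

Lemma bisection_cover_compact (K Z : set G) : compact K -> finite_set Z ->
  exists (D : {fset G}) (E : G -> set G),
    [/\ forall k, k \in D -> bisection (E k) /\ compact (E k),
        K `<=` \bigcup_(k in [set` D]) E k &
        forall k e, k \in D -> E k e -> Z (src e) -> K e].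
Proof.
move=> cK finZ.
have EP k : exists Ek, K k ->
    [/\ bisection Ek, compact Ek, Ek k & forall e, Ek e -> Z (src e) -> K e].
  have [Kk|nKk] := pselect (K k); last by exists set0.
  have [V [oV Vk srcV _]] := src_lh.2 k.
  pose Out := [set e | V e /\ Z (src e) /\ ~ K e].
  have finOut : finite_set Out.
    apply: (@sub_finite_set _ _ (\bigcup_(z in Z) (V `&` src @^-1` [set z]))).
      by move=> e [Ve [Ze _]]; exists (src e).
    by apply: bigcup_finite => // z _; apply: finite_fibre_in_injective.
  have : nbhs k (V `&` ~` Out).
    apply: open_nbhs_nbhs; split; last by split => // -[_ []].
    apply: openI => //; apply: closed_openC; apply: compact_closed => //.
    exact: finite_compact.
  move=> /ample_nbhs [Ek [bE cE Ekk EOut]]; exists Ek => _; split => // e.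
  by move=> /EOut [Ve nOe] Ze; apply: contrapT => nKe; apply: nOe.
have [E hE] := choice EP.
have oE k : K k -> open (E k) by move=> /hE [[]].
have KE : K `<=` cover K E by move=> k Kk; exists k => //; have [] := hE k Kk.
have [D DK KD] := compact_cover_compact cK oE KE.
exists D, E; split => // [k /DK /set_mem /hE [] //|k e /DK /set_mem /hE [_ _ _]].
exact.
Qed.

Lemma folner_boundary_le (K A B : set G) (eps : R) : folner K eps A ->
  finite_set B -> B !=set0 -> fcard B = fcard A ->
  finite_set (setmul K B `\` B) ->
  (fcard (setmul K B `\` B) <= fcard (setmul K A `\` A))%N -> folner K eps B.
Proof.
move=> [_ _ _ cKA] finB nB BA finKB KBA; split => //; rewrite BA.
by apply: le_trans cKA; rewrite ler_nat.
Qed.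

Lemma fcard_fib_bigcup (I : finType) (B : I -> set G) v :
  (forall i, {in B i &, injective src}) -> (forall i j x, B i x -> B j x -> i = j) ->
  (forall i, (src @` B i) v) -> fcard (fib (\bigcup_i B i) v) = fcard [set: I].
Proof.
move=> srcB Bdisj Bv.
have -> : fib (\bigcup_i B i) v = (fun i => arrow_from (B i) v) @` setT.
  apply/seteqP; split=> [x [[i _ Bix] <-]|_ [i _ <-]].
    by exists i => //; rewrite arrow_from_src.
  by have [Biv srcv] := arrow_fromP (Bv i); split => //; exists i.
apply: fcard_in_image finite_finset _ => i j _ _ ij.
by have [Biv _] := arrow_fromP (Bv i); apply: Bdisj Biv _; rewrite ij; case: (arrow_fromP (Bv j)).
Qed.

Local Notation prod_fam E B p := (setmul (E p.1) (B p.2)).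

(* The boundary of the [v]-fibre is parametrised, via [over v], by the
   products [T p] escaping it; the hypotheses make [over v] factor through
   [over u] on them, and the image of [over u] lies in the boundary at [u]. *)
Section FolnerTransfer.
Variables (I J : finType) (B : I -> set G) (E : J -> set G) (K : set G) (u v : G).
Local Notation T p := (prod_fam E B p).
Local Notation D w := (fib (\bigcup_i B i) w).
Hypothesis srcT : forall p : J * I, {in T p &, injective src}.
Hypothesis KE : K `<=` \bigcup_j E j.
Hypothesis EK : forall j e, E j e -> (rng @` D u) (src e) -> K e.
Hypothesis src_T : forall p, (src @` T p) v -> (src @` T p) u.
Hypothesis src_TB : forall p i, (src @` (T p `&` B i)) u -> (src @` (T p `&` B i)) v.
Hypothesis src_TT : forall p q, (src @` (T p `&` T q)) u -> (src @` (T p `&` T q)) v.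

Let over w (p : J * I) := arrow_from (T p) w.
Let escaping w := [set p | (src @` T p) w /\ ~ D w (over w p)].

Let boundary_v_sub : setmul K (D v) `\` D v `<=` over v @` escaping v.
Proof.
move=> _ [[k [y [Kk [[i _ Biy] yv] ky ->]]] kyD].
have [j _ Ejk] := KE Kk; set p := (j, i).
have Tky : T p (mul k y) by exists k, y.
have kyv : src (mul k y) = v by rewrite src_mul.
have pky : over v p = mul k y by rewrite /over -kyv arrow_from_src.
by exists p; rewrite ?pky //; split; [exists (mul k y) | rewrite pky].
Qed.

Let escaping_u_sub : over u @` escaping u `<=` setmul K (D u) `\` D u.
Proof.
move=> _ [p [Tpu nD] <-]; have [[e [b [Ee Bb eb te]]] tu] := arrow_fromP Tpu.
have bu : src b = u by rewrite -(src_mul eb) -te.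
have Dub : D u b by split => //; exists p.2.
by split => //; exists e, b; split => //; apply: (EK Ee); exists b.
Qed.

Let escaping_v_sub : escaping v `<=` escaping u.
Proof.
move=> p [Tpv nDv]; have Tpu := src_T Tpv; split => // -[[i _ Bit] tu]; apply: nDv.
have [Tt _] := arrow_fromP Tpu.
have [z [Tz Biz] zv] := src_TB (ex_intro2 _ _ _ (conj Tt Bit) tu : (src @` (T p `&` B i)) u).
by rewrite /over -zv arrow_from_src //; split => //; exists i.
Qed.

Let over_v_factors p q : escaping v p -> escaping v q -> over u p = over u q ->
  over v p = over v q.
Proof.
move=> /escaping_v_sub [Tpu _] /escaping_v_sub [Tqu _] pq.
have [Tp tu] := arrow_fromP Tpu; have [Tq _] := arrow_fromP Tqu; rewrite -/(over u p) in Tp tu.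
rewrite -/(over u q) -pq in Tq.
have [z [Tpz Tqz] zv] := src_TT (ex_intro2 _ _ _ (conj Tp Tq) tu : (src @` (T p `&` T q)) u).
by rewrite /over -zv !arrow_from_src.
Qed.

Lemma folner_boundary_transfer : finite_set (setmul K (D u) `\` D u) ->
  finite_set (setmul K (D v) `\` D v) /\
  (fcard (setmul K (D v) `\` D v) <= fcard (setmul K (D u) `\` D u))%N.
Proof.
move=> finKu; have finOv : finite_set (over v @` escaping v) by apply: finite_image.
split; first exact: sub_finite_set boundary_v_sub finOv.
apply: leq_trans (subset_leq_fcard finOv boundary_v_sub) _.
apply: leq_trans (leq_fcard_image_factor finite_finset over_v_factors) _.
apply: leq_trans (subset_leq_fcard finKu escaping_u_sub).
by apply: subset_leq_fcard; [apply: finite_image | apply: image_subset].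
Qed.

End FolnerTransfer.

Lemma transfer_nbhs (I J : finType) (B : I -> set G) (E : J -> set G) u :
  (forall i, bisection (B i) /\ compact (B i)) ->
  (forall j, bisection (E j) /\ compact (E j)) -> (forall i, (src @` B i) u) ->
  \forall v \near u, [/\
    forall p, (src @` prod_fam E B p) v -> (src @` prod_fam E B p) u,
    forall p i, (src @` (prod_fam E B p `&` B i)) u ->
                (src @` (prod_fam E B p `&` B i)) v,
    forall p q, (src @` (prod_fam E B p `&` prod_fam E B q)) u ->
                (src @` (prod_fam E B p `&` prod_fam E B q)) v &
    forall i, (src @` B i) v].
Proof.
move=> hB hE Bu.
have hT p : bisection (prod_fam E B p) /\ compact (prod_fam E B p).
  have [bE cE] := hE p.1; have [bB cB] := hB p.2.
  by split; [apply: bisection_setmul | apply: compact_setmul].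
have openT p : open (prod_fam E B p) by case: (hT p) => -[].
have openB i : open (B i) by case: (hB i) => -[].
have c1 : \forall v \near u, forall p, (src @` prod_fam E B p) v -> (src @` prod_fam E B p) u.
  by apply: filter_forall => p; apply: near_image_compact => //; case: (hT p).
have c2 : \forall v \near u, forall pi : (J * I) * I,
    (src @` (prod_fam E B pi.1 `&` B pi.2)) u -> (src @` (prod_fam E B pi.1 `&` B pi.2)) v.
  by apply: filter_forall => pi; apply: near_image_open => //; apply: openI.
have c3 : \forall v \near u, forall pq : (J * I) * (J * I),
    (src @` (prod_fam E B pq.1 `&` prod_fam E B pq.2)) u ->
    (src @` (prod_fam E B pq.1 `&` prod_fam E B pq.2)) v.
  by apply: filter_forall => pq; apply: near_image_open => //; apply: openI.
have c4 : \forall v \near u, forall i, (src @` B i) u -> (src @` B i) v.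
  by apply: filter_forall => i; apply: near_image_open.
apply: filterS (filterI c1 (filterI c2 (filterI c3 c4))) => v [h1 [h2 [h3 h4]]].
split=> [p|p i|p q|i]; [exact: h1 | exact: (h2 (p, i)) | exact: (h3 (p, q)) |].
exact: h4 (Bu i).
Qed.

Lemma finite_fib_bigcup (I : finType) (B : I -> set G) v :
  (forall i, {in B i &, injective src}) -> finite_set (fib (\bigcup_i B i) v).
Proof.
move=> srcB; apply: (@sub_finite_set _ _ (\bigcup_i (B i `&` src @^-1` [set v]))).
  by move=> x [[i _ Bix] xv]; exists i.
by apply: bigcup_finite => // i _; apply: finite_fibre_in_injective.
Qed.

Lemma near_folner_fib_bigcup (K : set G) (eps : R) (I : finType) (B : I -> set G) u :
  compact K -> (forall i, bisection (B i) /\ compact (B i)) ->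
  (forall i j x, B i x -> B j x -> i = j) -> (forall i, (src @` B i) u) ->
  folner K eps (fib (\bigcup_i B i) u) ->
  \forall v \near u, folner K eps (fib (\bigcup_i B i) v) /\ forall i, (src @` B i) v.
Proof.
move=> cK hB Bdisj Bu folu; have [finu [x [[i0 _ _] _]] finKu _] := folu.
have srcB i : {in B i &, injective src} by case: (hB i) => -[].
have [D [E [hE KE EK]]] := bisection_cover_compact cK (finite_image rng finu).
have hE' (j : D) : bisection (E (fsval j)) /\ compact (E (fsval j)) by apply: hE.
apply: filterS (transfer_nbhs hB hE' Bu) => v [src_T src_TB src_TT Bv]; split => //.
have KE' : K `<=` \bigcup_(j : D) E (fsval j).
  by move=> k /KE [j Dj Ejk]; exists [` Dj]%fset.
have srcT (p : D * I) : {in prod_fam (fun j : D => E (fsval j)) B p &, injective src}.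
  by case: (bisection_setmul (hE' p.1).1 (hB p.2).1).
have [finKv KvKu] := folner_boundary_transfer srcT KE' (fun j e => EK _ e (fsvalP j))
  src_T src_TB src_TT finKu.
apply: folner_boundary_le folu (finite_fib_bigcup _ srcB) _ _ finKv KvKu.
  by have [Bv0 v0] := arrow_fromP (Bv i0); exists (arrow_from (B i0) v); split => //; exists i0.
by rewrite !fcard_fib_bigcup.
Qed.

Section MultisectionOfBisections.
Variables (F : finType) (b : F -> set G).
Hypothesis hb : forall i, bisection (b i) /\ compact (b i).
Hypothesis b_src : forall i j p, b i p -> exists2 q, b j q & src q = src p.
Hypothesis b_rng : forall i j x y, i != j -> b i x -> b j y -> rng x <> rng y.
Local Notation C i j := (setmul (b i) (inv @` b j)).

Let srcb i : {in b i &, injective src}. Proof. by case: (hb i) => -[]. Qed.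
Let rngb i : {in b i &, injective rng}. Proof. by case: (hb i) => -[]. Qed.

Let C_mulP i j x : C i j x <->
  exists p q, [/\ b i p, b j q, src p = src q & x = mul p (inv q)].
Proof.
split=> [[p [_ [bp [q bq <-] pq ->]]]|[p [q [bp bq pq ->]]]].
  by exists p, q; rewrite pq rng_inv.
by exists p, (inv q); split; rewrite ?rng_inv //; exists q.
Qed.

Let C_diag i x : C i i x -> exists2 p, b i p & x = rng p.
Proof.
move=> /C_mulP [p [q [bp bq pq ->]]]; exists p => //.
have -> : q = p by apply: (@srcb i); rewrite ?inE // pq.
exact: mul_inv.
Qed.

Lemma multisection_of_bisections :
  compact_open_multisection src rng mul (fun i j => C i j).
Proof.
have bC i j : bisection (C i j).
  by apply: bisection_setmul; [case: (hb i) | apply: bisection_image_inv; case: (hb j)].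
split; last first.
  move=> i j; split; last by case: (bC i j).
  by apply: compact_setmul; [case: (hb i) | apply: compact_image_inv; case: (hb j)].
split=> [i j|i j k||i j ij]; first exact: bC; last 2 first.
- by move=> i x /C_diag [p _ ->]; apply: rng_in_unit_space.
- apply/seteqP; split => // x [/C_diag [p bp xp] /C_diag [q bq xq]].
  by apply: (b_rng ij bp bq); rewrite -xp -xq.
apply/seteqP; split=> [w [y [z [Cy Cz yz ->]]]|].
  move: Cy Cz yz => /C_mulP [p [q [bp bq pq ->]]] /C_mulP [q' [r [bq' br q'r ->]]] yz.
  have qq' : q = q'.
    apply: (@rngb j); rewrite ?inE //.
    by move: yz; rewrite src_mul ?rng_inv // src_inv rng_mul // rng_inv.
  by subst q'; rewrite mul_inv_inv_r //; apply/C_mulP; exists p, r; split => //; rewrite pq.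
move=> w /C_mulP [p [r [bp br pr ->]]]; have [q bq qp] := b_src j bp.
have pq : src p = src q by rewrite qp.
have qr : src q = src r by rewrite qp pr.
exists (mul p (inv q)), (mul q (inv r)); split; rewrite ?mul_inv_inv_r //.
- by apply/C_mulP; exists p, q.
- by apply/C_mulP; exists q, r.
- by rewrite src_mul ?rng_mul ?src_inv ?rng_inv.
Qed.

End MultisectionOfBisections.

Lemma setmul_inv_units (b b0 : set G) : b0 `<=` unit_space ->
  (forall p, b p -> exists2 q, b0 q & src q = src p) -> setmul b (inv @` b0) = b.
Proof.
move=> b0_units b_b0; apply/seteqP; split=> [_ [p [_ [bp [q b0q <-] pq ->]]]|p bp].
  have uq := b0_units q b0q.
  by rewrite unit_inv // -[q]unit_src // -[src q]rng_inv -pq mul_src_r.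
have [q b0q qp] := b_b0 p bp; have uq := b0_units q b0q.
exists p, q; split => //; last by rewrite -[q]unit_src // qp mul_src_r.
  by exists q; rewrite ?unit_inv.
by rewrite unit_rng // -[q]unit_src.
Qed.

Lemma fib_separating_bisections (A : set G) u : finite_set A ->
  A `<=` [set x | src x = u] -> A u -> unit_space u ->
  isotropy src rng u = [set u] ->
  exists (I : finType) (B : I -> set G), [/\
    forall i, bisection (B i) /\ compact (B i),
    forall i j x y, i != j -> B i x -> B j y -> rng x <> rng y,
    forall i, (src @` B i) u,
    fib (\bigcup_i B i) u = A &
    exists2 iu, B iu `<=` unit_space & B iu u].
Proof.
move=> finA Au Auu uu iso; have [B0 [hB0 rngB0]] := separating_bisections finA Au uu iso.
have inA (i : fset_set A) : A (fsval i) by have := fsvalP i; rewrite in_fset_set // inE.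
have toI a : A a -> a \in fset_set A by move=> Aa; rewrite in_fset_set // inE.
pose B (i : fset_set A) := B0 (fsval i).
have hB i : [/\ bisection (B i), compact (B i), B i (fsval i) &
  (fsval i = u -> B i `<=` unit_space)] by apply: hB0.
exists (fset_set A), B; split.
- by move=> i; have [] := hB i.
- by move=> i j x y /eqP ij; apply: rngB0 (inA i) (inA j) _ => /val_inj.
- by move=> i; exists (fsval i); [case: (hB i) | apply: Au].
- apply/seteqP; split=> [x [[i _ Bix] xu]|a Aa]; last first.
    by split; [exists [` toI a Aa]%fset => //; case: (hB [` toI a Aa]%fset) | apply: Au].
  have [[_ srcB _] _ Bi _] := hB i.
  by rewrite (srcB x (fsval i)) ?inE ?xu ?Au.
- have [_ _ Biu units] := hB [` toI u Auu]%fset.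
  by exists [` toI u Auu]%fset => //; apply: units.
Qed.

Lemma bisection_restrict_src (B W : set G) : bisection B -> compact B ->
  open W -> compact W ->
  bisection (B `&` src @^-1` W) /\ compact (B `&` src @^-1` W).
Proof.
move=> [oB srcB rngB] cB oW cW; split.
  split; first by apply: openI => //; apply: open_preimage_src.
    by move=> x y /set_mem [Bx _] /set_mem [By _]; apply: srcB; rewrite inE.
  by move=> x y /set_mem [Bx _] /set_mem [By _]; apply: rngB; rewrite inE.
apply: compact_closedI => //; apply: closed_comp; last exact: compact_closed.
by move=> x _; apply: continuous_src.
Qed.

Lemma folner_multisection (K : set G) (eps : R) u A :
  compact K -> unit_space u -> isotropy src rng u = [set u] ->
  folner K eps A -> A `<=` [set x | src x = u] -> A u ->
  exists (F : finType) (C : F -> F -> set G) (iu : F),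
    [/\ compact_open_multisection src rng mul C, C iu iu u &
        forall v, C iu iu v -> folner K eps (fib (\bigcup_(i in [set: F]) C i iu) v)].
Proof.
move=> cK uu iso folA Au Auu; have [finA _ _ _] := folA.
have [I [B [hB B_rng Bu fibu [iu Biu_units Biuu]]]] :=
  fib_separating_bisections finA Au Auu uu iso.
have Bdisj i j x : B i x -> B j x -> i = j.
  by move=> Bix Bjx; have [//|ij] := eqVneq i j; exfalso; apply: B_rng ij Bix Bjx _.
rewrite -fibu in folA.
have [W [[oW _ _] cW Wu /= Wnear]] := ample_nbhs (filterI
  (near_folner_fib_bigcup cK hB Bdisj Bu folA) (unit_space_nbhs uu)).
pose b i := B i `&` src @^-1` W.
have hb i : bisection (b i) /\ compact (b i).
  by have [bB cB] := hB i; apply: bisection_restrict_src.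
have b_src i j p : b i p -> exists2 q, b j q & src q = src p.
  move=> [_ Wp]; have [[_ Bsrcp] _] := Wnear _ Wp; have [q Bjq qp] := Bsrcp j.
  by exists q => //; split => //=; rewrite qp.
have b_rng i j x y : i != j -> b i x -> b j y -> rng x <> rng y.
  by move=> ij [Bix _] [Bjy _]; exact: B_rng ij Bix Bjy.
have biu_units : b iu `<=` unit_space by move=> x [/Biu_units].
have Ciu i : setmul (b i) (inv @` b iu) = b i.
  by apply: setmul_inv_units => // p; apply: b_src.
exists I, (fun i j => setmul (b i) (inv @` b j)), iu; split.
- exact: multisection_of_bisections hb b_src b_rng.
- by rewrite Ciu; split => //=; rewrite unit_src.
move=> v; rewrite Ciu => -[Biuv Wsv]; rewrite (eq_bigcupr (fun i _ => Ciu i)).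
have Wv : W v by rewrite -(unit_src (Biu_units _ Biuv)).
have [[folv _] _] := Wnear v Wv; suff -> : fib (\bigcup_i b i) v = fib (\bigcup_i B i) v by [].
apply/seteqP; split=> [x [[i _ [Bix _]] xv]|x [[i _ Bix] xv]]; split=> //; exists i => //.
by split; rewrite //= xv.
Qed.

End AmpleGroupoid.

Unset Implicit Arguments.

Theorem mainTheorem8 (R : realType) (G : topologicalType)
  (src rng : G -> G) (mul : G -> G -> G) (inv : G -> G) :
  ample_groupoid src rng mul inv ->
  ubiquitously_fiberwise_amenable src rng mul R ->
  forall u : G, unit_space src u -> isotropy src rng u = [set u] ->
  forall (K : set G) (eps : R), compact K -> 0 < eps ->
  exists (F : finType) (C : F -> F -> set G) (iu : F),
    [/\ compact_open_multisection src rng mul C,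
        C iu iu u &
        forall v, C iu iu v ->
          folner src rng mul K eps
            (fib src (\bigcup_(i in [set: F]) C i iu) v)].
Proof.
move=> [gpd [top [hausG [_ [_ [rng_lh [src_lh [ampleG _]]]]]]]] ufaG u uu iso K eps cK eps0.
have [A [folA Au Auu]] := folner_in_fibre_with_unit gpd rng_lh src_lh ufaG cK eps0 uu.
by have := folner_multisection gpd top hausG src_lh ampleG cK uu iso folA Au Auu.
Qed.
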